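(* Let $\mathcal S$ be a finite nonempty set of positive half-integers (elements of $\tfrac12\mathbb Z_{>0}$), and let $(\rho_{s'})_{s'\in\mathcal S}$ be positive real numbers with $\sum_{s'\in\mathcal S}\rho_{s'}=1$. For $s\in\mathcal S$ define the vacuum energy density $$\mathcal E_0^{(s)}=-\sum_{s'\in\mathcal S}\rho_{s'}\int_{-\infty}^{\infty}\sigma^{(0)}(\lambda)\,\Psi^{(s')}_{2s}(\lambda)\,d\lambda ,\qquad \sigma^{(0)}(\lambda)=\frac{1}{2\cosh(\pi\lambda)} .$$ Then, for every $s\in\mathcal S$, $$\mathcal E_0^{(s)}=-\sum_{s'\in\mathcal S}\rho_{s'}\left(\psi\Big(\frac{s'+s+1}{2}\Big)-\psi\Big(\frac{|s'-s|+1}{2}\Big)\right),$$ where $\psi$ is the Euler digamma function.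
   Context: This is the energy per site of the antiferromagnetic vacuum of a periodic $L_0$-regular $gl(2)$ (XXX) spin chain whose site spins take the values in $\mathcal S$, the value $s'$ occurring with density $\rho_{s'}$ in the repeated motif, the energy being that of the Hamiltonian $H^{(s)}$ built from the transfer matrix with auxiliary space of spin $s$. In the thermodynamic limit under the string hypothesis the vacuum consists of filled seas of $2s'$-strings ($s'\in\mathcal S$) with root densities $\rho_{s'}\sigma^{(0)}(\lambda)$, and the energy per site is given by the integral in the claim. Here, for a positive integer $p$ and $m\in\tfrac12\mathbb Z_{>0}$, $$\Psi^{(m)}_{p}(\lambda)=\sum_{\alpha=-m+\frac12}^{m-\frac12} f_{\alpha+\frac p2}(\lambda),$$ the sum running over $\alpha\in\{-m+\tfrac12,-m+\tfrac32,\dots,m-\tfrac12\}$, where $f_x(\lambda)=\dfrac{2x}{\lambda^2+x^2}$ for real $x\neq0$ and $f_0\equiv0$ (this is the energy contribution of a $2m$-string with real center $\lambda$). *)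

From Stdlib Require Import Reals Lra List.
From Coquelicot Require Import Coquelicot.
Open Scope R_scope.

(* A positive half-integer s' in (1/2)Z_{>0} is encoded by the positive
   natural number n = 2 s'; its real value is [half n] = n/2. *)
Definition half (n : nat) : R := INR n / 2.

Definition lsum {A : Type} (F : A -> R) (l : list A) : R :=
  fold_right Rplus 0 (map F l).

Definition fx (x lam : R) : R :=
  if Req_EM_T x 0 then 0 else 2 * x / (lam ^ 2 + x ^ 2).

Definition Psi (twom : nat) (p : nat) (lam : R) : R :=
  lsum (fun k : nat => fx (- half twom + / 2 + INR k + INR p / 2) lam)
       (seq 0 twom).

Definition sigma0 (lam : R) : R := / (2 * cosh (PI * lam)).

Definition integral_R (f : R -> R) : R :=
  RInt_gen f (Rbar_locally m_infty) (Rbar_locally p_infty).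

(* vacuum energy density E_0^{(s)}, s = twos/2, spins S encoded by 2s'; note the lower index of Psi is p = 2s = twos *)
Definition E0 (S : list nat) (rho : nat -> R) (twos : nat) : R :=
  - lsum (fun twos' => rho twos' *
            integral_R (fun lam => sigma0 lam * Psi twos' twos lam)) S.

Definition euler_gamma : R :=
  real (Lim_seq (fun n : nat =>
     sum_n (fun k : nat => / INR (S k)) (Nat.pred n) - ln (INR n))).

Definition digamma (x : R) : R :=
  - euler_gamma + Series (fun n : nat => / (INR n + 1) - / (INR n + x)).

From Stdlib Require Import Reals Lra Lia List.
From Coquelicot Require Import Coquelicot.
Open Scope R_scope.

(* Let a_n = n + 1/2 ([hodd n]).  The Fourier cosine series of cosh (t y) on [0, PI] yields the
   partial fractions PI / (2 cosh (PI t)) = sum_n (-1)^n a_n / (a_n^2 + t^2).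
   Integrating term by term against the Lorentzian f_x, x > 0, with
   int a/(a^2+l^2) * 2x/(l^2+x^2) dl = 2 PI/(a + x), gives
   sum_n (-1)^n 2/(a_n + x) = psi(x/2 + 3/4) - psi(x/2 + 1/4); the interchange is
   justified by the alternating-series bound on the tail, which is integrable against
   f_x uniformly in the cut-off.  Consecutive members of a 2s'-string differ by 1, so
   in Psi these differences of digamma values telescope. *)

Definition hodd (n : nat) : R := INR n + /2.

Lemma hodd_pos n : 0 < hodd n.
Proof. unfold hodd. pose proof (pos_INR n). lra. Qed.

Lemma hodd_S n : hodd (S n) = hodd n + 1.
Proof. unfold hodd. rewrite S_INR. lra. Qed.

Lemma sin_hodd_PI n : sin (hodd n * PI) = (-1) ^ n.
Proof.
  induction n as [|n IH].
  - unfold hodd. simpl. replace ((0 + /2) * PI) with (PI / 2) by lra. apply sin_PI2.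
  - rewrite hodd_S, Rmult_plus_distr_r, Rmult_1_l, neg_sin, IH. simpl. ring.
Qed.

Lemma cos_hodd_PI n : cos (hodd n * PI) = 0.
Proof.
  induction n as [|n IH].
  - unfold hodd. simpl. replace ((0 + /2) * PI) with (PI / 2) by lra. apply cos_PI2.
  - rewrite hodd_S, Rmult_plus_distr_r, Rmult_1_l, neg_cos, IH. ring.
Qed.

Definition cosh_cos_coef (t : R) (n : nat) : R :=
  (-1) ^ n * (hodd n * cosh (PI * t) / (hodd n ^ 2 + t ^ 2) - / hodd n).

Lemma is_RInt_cosh_cos t n :
  is_RInt (fun y => (cosh (t * y) - 1) * cos (hodd n * y)) 0 PI (cosh_cos_coef t n).
Proof.
  set (a := hodd n).
  assert (Ha : 0 < a) by apply hodd_pos.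
  assert (Hd : 0 < a ^ 2 + t ^ 2) by nra.
  set (F := fun y => (t * ((exp (t * y) - exp (- (t * y))) / 2) * cos (a * y)
                      + a * ((exp (t * y) + exp (- (t * y))) / 2) * sin (a * y)) / (a ^ 2 + t ^ 2)
                      - sin (a * y) / a).
  replace (cosh_cos_coef t n) with (minus (F PI) (F 0)).
  - apply (is_RInt_derive F).
    + intros y _. unfold F, cosh. auto_derive; auto. field. lra.
    + intros y _. apply (@ex_derive_continuous R_AbsRing R_NormedModule).
      unfold cosh. auto_derive. auto.
  - unfold F, minus, plus, opp, cosh_cos_coef; simpl. fold a.
    rewrite !Rmult_0_r, sin_0, cos_0, Ropp_0, exp_0.
    unfold a. rewrite sin_hodd_PI, cos_hodd_PI. fold a.
    unfold cosh. rewrite (Rmult_comm t PI). field. lra.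
Qed.

Definition dirichlet (m : nat) (y : R) : R := sum_f_R0 (fun n => cos (hodd n * y)) m.
Definition fejer (N : nat) (y : R) : R := sum_f_R0 (fun m => dirichlet m y) N.

Lemma sin_shift_half b u :
  2 * sin u * cos (b + u) + sin b = sin (b + 2 * u).
Proof.
  rewrite sin_plus, cos_plus, sin_2a, cos_2a.
  pose proof (sin2_cos2 u) as Hsc. unfold Rsqr in Hsc.
  replace (cos u * cos u) with (1 - sin u * sin u) by lra. ring.
Qed.

Lemma cos_shift_half b u :
  2 * sin u * sin (b + u) + cos (b + 2 * u) = cos b.
Proof.
  rewrite sin_plus, cos_plus, sin_2a, cos_2a.
  pose proof (sin2_cos2 u) as Hsc. unfold Rsqr in Hsc.
  replace (cos u * cos u) with (1 - sin u * sin u) by lra. ring.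
Qed.

Lemma dirichlet_closed m y : 2 * sin (y / 2) * dirichlet m y = sin ((INR m + 1) * y).
Proof.
  induction m as [|m IH].
  - unfold dirichlet, hodd; simpl.
    replace ((0 + /2) * y) with (y / 2) by lra.
    replace ((0 + 1) * y) with (2 * (y / 2)) by lra. rewrite sin_2a. ring.
  - unfold dirichlet in *. rewrite tech5, Rmult_plus_distr_l, IH, S_INR.
    replace ((INR m + 1 + 1) * y) with ((INR m + 1) * y + 2 * (y / 2)) by lra.
    rewrite <- sin_shift_half. unfold hodd. rewrite S_INR.
    replace ((INR m + 1 + /2) * y) with ((INR m + 1) * y + y / 2) by lra. ring.
Qed.

Lemma fejer_closed N y :
  4 * sin (y / 2) ^ 2 * fejer N y = cos (y / 2) - cos ((INR N + 3 / 2) * y).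
Proof.
  assert (Hd : forall m, 4 * sin (y / 2) ^ 2 * dirichlet m y
                         = 2 * sin (y / 2) * sin ((INR m + 1) * y)).
  { intros m. rewrite <- dirichlet_closed. ring. }
  induction N as [|N IH].
  - unfold fejer. simpl sum_f_R0. rewrite Hd.
    replace ((INR 0 + 1) * y) with (y / 2 + y / 2) by (simpl; lra).
    replace ((INR 0 + 3 / 2) * y) with (y / 2 + 2 * (y / 2)) by (simpl; lra).
    rewrite <- (cos_shift_half (y / 2) (y / 2)) at 1. ring.
  - unfold fejer in *. rewrite tech5, Rmult_plus_distr_l, IH, Hd, !S_INR.
    rewrite <- (cos_shift_half ((INR N + 3 / 2) * y) (y / 2)).
    replace ((INR N + 1 + 1) * y) with ((INR N + 3 / 2) * y + y / 2) by lra.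
    replace ((INR N + 1 + 3 / 2) * y) with ((INR N + 3 / 2) * y + 2 * (y / 2)) by lra. ring.
Qed.

Lemma sin_ge_third v : 0 <= v <= 2 -> v / 3 <= sin v.
Proof.
  intros Hv.
  destruct (pre_sin_bound v 0 (proj1 Hv) ltac:(lra)) as [Hlb _].
  unfold sin_approx, sin_term in Hlb. simpl in Hlb.
  nra.
Qed.

Lemma cosh_opp u : cosh (- u) = cosh u.
Proof. unfold cosh. rewrite Ropp_involutive. field. Qed.

Lemma cosh_Rabs u : cosh (Rabs u) = cosh u.
Proof.
  destruct (Rcase_abs u).
  - rewrite Rabs_left by lra. apply cosh_opp.
  - rewrite Rabs_right by lra. reflexivity.
Qed.

(* With [z = exp (|u|/2)]: [cosh u - 1 = (z - 1/z)^2 / 2] and [z - 1/z <= |u| z]. *)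
Lemma cosh_sub1_bound u : 0 <= cosh u - 1 <= u ^ 2 * exp (Rabs u) / 2.
Proof.
  rewrite <- cosh_Rabs, <- pow2_abs.
  set (w := Rabs u / 2).
  assert (Hw : 0 <= w) by (unfold w; pose proof (Rabs_pos u); lra).
  replace (Rabs u) with (w + w) by (unfold w; lra).
  set (z := exp w). set (z' := exp (- w)).
  assert (Hzz : z * z' = 1) by (unfold z, z'; rewrite <- exp_plus, Rplus_opp_r; apply exp_0).
  assert (Hz : 1 <= z) by (unfold z; pose proof (exp_ineq1_le w); lra).
  assert (Hz' : 0 < z') by apply exp_pos.
  assert (E1 : exp (w + w) = z * z) by (unfold z; apply exp_plus).
  assert (E2 : exp (- (w + w)) = z' * z') by (unfold z'; rewrite <- exp_plus; f_equal; ring).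
  assert (Hcz : cosh (w + w) = (z * z + z' * z') / 2) by (unfold cosh; rewrite E1, E2; auto).
  rewrite Hcz, E1.
  assert (Hk : 1 - 2 * w <= z' * z').
  { rewrite <- E2. pose proof (exp_ineq1_le (- (w + w))). lra. }
  assert (H1 : z - z' <= 2 * w * z).
  { assert (z * z * (1 - 2 * w) <= z * z * (z' * z')) by (apply Rmult_le_compat_l; nra).
    nra. }
  assert (H0 : 0 <= z - z') by nra.
  assert ((z - z') ^ 2 <= (2 * w * z) ^ 2) by (apply pow_incr; lra).
  assert ((z * z + z' * z') / 2 - 1 = (z - z') ^ 2 / 2) by (field_simplify; nra).
  split; nra.
Qed.

Lemma cosh_ge_1 u : 1 <= cosh u.
Proof. pose proof (cosh_sub1_bound u). lra. Qed.

Lemma exp_le_exp x y : x <= y -> exp x <= exp y.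
Proof. intros [H|H]; [left; now apply exp_increasing | subst; lra]. Qed.

Lemma fejer_bound N y : 0 < y <= PI -> y ^ 2 * Rabs (fejer N y) <= 18.
Proof.
  intros Hy. pose proof PI_4.
  assert (Hs : y / 6 <= sin (y / 2)) by (pose proof (sin_ge_third (y / 2)); lra).
  assert (HK : 4 * sin (y / 2) ^ 2 * Rabs (fejer N y) <= 2).
  { replace (4 * sin (y / 2) ^ 2 * Rabs (fejer N y))
      with (Rabs (4 * sin (y / 2) ^ 2 * fejer N y))
      by (rewrite !Rabs_mult, Rabs_pos_eq, <- RPow_abs, pow2_abs by lra; reflexivity).
    rewrite fejer_closed. apply Rabs_le.
    pose proof (COS_bound (y / 2)). pose proof (COS_bound ((INR N + 3 / 2) * y)). lra. }
  pose proof (Rabs_pos (fejer N y)).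
  assert (y ^ 2 <= 36 * sin (y / 2) ^ 2) by nra.
  nra.
Qed.

Lemma cosh_fejer_bound t N y : 0 <= y <= PI ->
  Rabs ((cosh (t * y) - 1) * fejer N y) <= 9 * t ^ 2 * exp (Rabs t * PI).
Proof.
  intros Hy.
  assert (HE : exp (Rabs (t * y)) <= exp (Rabs t * PI)).
  { apply exp_le_exp. rewrite Rabs_mult, (Rabs_pos_eq y) by lra.
    apply Rmult_le_compat_l; [apply Rabs_pos | lra]. }
  pose proof (exp_pos (Rabs (t * y))).
  destruct (Req_dec y 0) as [->|Hy0].
  { rewrite Rmult_0_r, cosh_0, Rminus_diag, Rmult_0_l, Rabs_R0. nra. }
  pose proof (fejer_bound N y ltac:(lra)) as HK.
  destruct (cosh_sub1_bound (t * y)) as [G0 G1].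
  rewrite Rabs_mult, (Rabs_pos_eq (cosh (t * y) - 1)) by lra.
  pose proof (Rabs_pos (fejer N y)).
  replace ((t * y) ^ 2) with (t ^ 2 * y ^ 2) in G1 by ring.
  apply Rle_trans with (t ^ 2 * exp (Rabs (t * y)) / 2 * (y ^ 2 * Rabs (fejer N y))).
  - replace (t ^ 2 * exp (Rabs (t * y)) / 2 * (y ^ 2 * Rabs (fejer N y)))
      with (t ^ 2 * y ^ 2 * exp (Rabs (t * y)) / 2 * Rabs (fejer N y)) by field.
    apply Rmult_le_compat_r; lra.
  - pose proof (pow2_ge_0 t).
    apply Rle_trans with (t ^ 2 * exp (Rabs (t * y)) / 2 * 18).
    + apply Rmult_le_compat_l; [|exact HK]. apply Rmult_le_pos; [nra | lra].
    + nra.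
Qed.

Lemma is_RInt_sum_f_R0 (F : nat -> R -> R) (v : nat -> R) a b :
  (forall n, is_RInt (F n) a b (v n)) ->
  forall N, is_RInt (fun y => sum_f_R0 (fun n => F n y) N) a b (sum_f_R0 v N).
Proof.
  intros H N. induction N as [|N IH].
  - apply H.
  - rewrite tech5. exact (is_RInt_plus _ _ _ _ _ _ IH (H (S N))).
Qed.

Lemma is_RInt_cosh_fejer t N :
  is_RInt (fun y => (cosh (t * y) - 1) * fejer N y) 0 PI
    (sum_f_R0 (fun m => sum_f_R0 (cosh_cos_coef t) m) N).
Proof.
  eapply is_RInt_ext.
  2: { apply (is_RInt_sum_f_R0 (fun m y => sum_f_R0 (fun n => (cosh (t * y) - 1) * cos (hodd n * y)) m)).
       intros m. apply (is_RInt_sum_f_R0 (fun n y => (cosh (t * y) - 1) * cos (hodd n * y))).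
       intros n. apply is_RInt_cosh_cos. }
  intros y _. unfold fejer, dirichlet. symmetry. rewrite scal_sum.
  apply sum_eq. intros m _. rewrite Rmult_comm, scal_sum. apply sum_eq. intros n _. ring.
Qed.

Lemma is_lim_inv_INR : is_lim_seq (fun n => / INR n) 0.
Proof.
  replace (Finite 0) with (Rbar_inv p_infty) by reflexivity.
  apply is_lim_seq_inv; [apply is_lim_seq_INR | discriminate].
Qed.

(* Cesàro: the means of the partial sums tend to [L], but are [O(1/n)]. *)
Lemma lim_bounded_partial_sums (s : nat -> R) (L B : R) :
  is_lim_seq s L -> (forall N, Rabs (sum_f_R0 s N) <= B) -> L = 0.
Proof.
  intros Hs HB.
  pose proof (Cesaro_1 _ _ (proj1 (is_lim_seq_Reals _ _) Hs)) as Hmean.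
  apply is_lim_seq_Reals in Hmean.
  assert (Hz : is_lim_seq (fun n => sum_f_R0 s (pred n) / INR n) 0).
  { apply is_lim_seq_le_le_loc with (u := fun n => - B * / INR n) (w := fun n => B * / INR n).
    - exists 1%nat. intros n Hn.
      assert (0 < / INR n) by (apply Rinv_0_lt_compat, lt_0_INR; lia).
      specialize (HB (pred n)). apply Rabs_le_between in HB. unfold Rdiv.
      split; apply Rmult_le_compat_r; lra.
    - replace (Finite 0) with (Rbar_mult (- B) 0) by (simpl; f_equal; ring).
      apply is_lim_seq_scal_l, is_lim_inv_INR.
    - replace (Finite 0) with (Rbar_mult B 0) by (simpl; f_equal; ring).
      apply is_lim_seq_scal_l, is_lim_inv_INR. }
  apply is_lim_seq_unique in Hmean. apply is_lim_seq_unique in Hz.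
  rewrite Hmean in Hz. now injection Hz.
Qed.

Lemma is_lim_alt_inv_hodd :
  is_lim_seq (fun N => sum_f_R0 (tg_alt (fun n => / hodd n)) N) (PI / 2).
Proof.
  pose proof Alt_PI_eq as E. unfold Alt_PI in E. destruct exist_PI as [l Hl].
  apply is_lim_seq_Reals, (is_lim_seq_scal_l _ 2) in Hl. simpl in Hl.
  replace (PI / 2) with (2 * l) by lra.
  eapply is_lim_seq_ext; [|exact Hl].
  intros N. simpl. rewrite scal_sum. apply sum_eq. intros n _.
  unfold tg_alt, PI_tg, hodd. rewrite plus_INR, mult_INR. simpl.
  pose proof (pos_INR n). field. lra.
Qed.

Lemma is_series_telescope_inv : is_series (fun n => / (INR n + 1) - / (INR n + 2)) 1.
Proof.
  unfold is_series. change (is_lim_seq (sum_n (fun n => / (INR n + 1) - / (INR n + 2))) 1).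
  apply is_lim_seq_ext with (u := fun N => 1 - / (INR N + 2)).
  { intros N. rewrite sum_n_Reals. symmetry.
    induction N as [|N IH].
    - simpl. field.
    - rewrite tech5, IH, S_INR. pose proof (pos_INR N). field. lra. }
  replace (Finite 1) with (Rbar_minus 1 0) by (simpl; f_equal; ring).
  apply is_lim_seq_minus'; [apply is_lim_seq_const|].
  replace (Finite 0) with (Rbar_inv p_infty) by reflexivity.
  apply is_lim_seq_inv; [|discriminate].
  eapply is_lim_seq_le_p_loc; [|apply is_lim_seq_INR].
  exists 0%nat. intros; lra.
Qed.

Lemma ex_series_inv_sq : ex_series (fun n => / (INR n + 1) ^ 2).
Proof.
  apply (@ex_series_le R_AbsRing R_CompleteNormedModule _
           (fun n => 2 * (/ (INR n + 1) - / (INR n + 2)))).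
  - intros n. change (Rabs (/ (INR n + 1) ^ 2) <= 2 * (/ (INR n + 1) - / (INR n + 2))).
    pose proof (pos_INR n).
    rewrite Rabs_pos_eq by (apply Rlt_le, Rinv_0_lt_compat; nra).
    assert (E : 2 * (/ (INR n + 1) - / (INR n + 2)) - / (INR n + 1) ^ 2
               = INR n / ((INR n + 1) ^ 2 * (INR n + 2))) by (field; lra).
    assert (0 <= INR n / ((INR n + 1) ^ 2 * (INR n + 2))).
    { apply Rmult_le_pos; [lra | apply Rlt_le, Rinv_0_lt_compat; nra]. }
    lra.
  - apply (@ex_series_scal_l R_AbsRing R_NormedModule).
    exists 1. apply is_series_telescope_inv.
Qed.

Definition sech_remainder (t : R) (n : nat) : R :=
  (-1) ^ n * / (hodd n * (hodd n ^ 2 + t ^ 2)).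

Lemma ex_series_sech_remainder t : ex_series (sech_remainder t).
Proof.
  apply (@ex_series_le R_AbsRing R_CompleteNormedModule _ (fun n => 8 * / (INR n + 1) ^ 2)).
  - intros n. change (Rabs (sech_remainder t n) <= 8 * / (INR n + 1) ^ 2).
    unfold sech_remainder. rewrite Rabs_mult, pow_1_abs, Rmult_1_l.
    pose proof (pos_INR n). pose proof (hodd_pos n).
    assert (Ha : (INR n + 1) / 2 <= hodd n) by (unfold hodd; lra).
    assert (Hp : 0 < hodd n * (hodd n ^ 2 + t ^ 2)) by (apply Rmult_lt_0_compat; nra).
    rewrite Rabs_pos_eq by (apply Rlt_le, Rinv_0_lt_compat; lra).
    replace (8 * / (INR n + 1) ^ 2) with (/ ((INR n + 1) ^ 2 / 8)) by (field; lra).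
    apply Rinv_le_contravar; [nra|].
    assert (hodd n ^ 3 <= hodd n * (hodd n ^ 2 + t ^ 2)) by nra.
    assert (((INR n + 1) / 2) ^ 3 <= hodd n ^ 3) by (apply pow_incr; lra).
    nra.
  - apply (@ex_series_scal_l R_AbsRing R_NormedModule), ex_series_inv_sq.
Qed.

Definition sech_term (t : R) (n : nat) : R := hodd n / (hodd n ^ 2 + t ^ 2).

Lemma cosh_cos_coef_split t n :
  cosh_cos_coef t n = (cosh (PI * t) - 1) * tg_alt (fun k => / hodd k) n
                      + - (cosh (PI * t) * t ^ 2) * sech_remainder t n.
Proof.
  unfold cosh_cos_coef, tg_alt, sech_remainder. pose proof (hodd_pos n).
  assert (0 < hodd n ^ 2 + t ^ 2) by nra. field. lra.
Qed.

Lemma sech_term_split t n :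
  tg_alt (sech_term t) n = / cosh (PI * t) * (cosh_cos_coef t n + tg_alt (fun k => / hodd k) n).
Proof.
  unfold cosh_cos_coef, tg_alt, sech_term. pose proof (hodd_pos n).
  pose proof (cosh_ge_1 (PI * t)).
  assert (0 < hodd n ^ 2 + t ^ 2) by nra. field. lra.
Qed.

(* The series of the cosine coefficients [cosh_cos_coef t n] of [cosh (t y) - 1]
   converges, and its Fejér sums are the integrals [is_RInt_cosh_fejer], which are
   bounded; so its sum is 0, which is the expansion after [sech_term_split]. *)
Lemma sech_partial_fractions t :
  is_lim_seq (fun N => sum_f_R0 (tg_alt (sech_term t)) N) (PI * sigma0 t).
Proof.
  set (C := cosh (PI * t)).
  assert (HC : 1 <= C) by apply cosh_ge_1.
  set (L := (C - 1) * (PI / 2) + - (C * t ^ 2) * Series (sech_remainder t)).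
  assert (HL : is_lim_seq (fun N => sum_f_R0 (cosh_cos_coef t) N) L).
  { apply is_lim_seq_ext with
      (u := fun N => (C - 1) * sum_f_R0 (tg_alt (fun n => / hodd n)) N
                     + - (C * t ^ 2) * sum_f_R0 (sech_remainder t) N).
    { intros N. rewrite !scal_sum, <- plus_sum.
      apply sum_eq. intros n _. rewrite cosh_cos_coef_split. fold C. ring. }
    apply is_lim_seq_plus'.
    - apply (is_lim_seq_scal_l _ _ (PI / 2)), is_lim_alt_inv_hodd.
    - apply (is_lim_seq_scal_l _ _ (Series (sech_remainder t))).
      eapply is_lim_seq_ext; [|apply (Series_correct _ (ex_series_sech_remainder t))].
      intros N. apply sum_n_Reals. }
  assert (HL0 : L = 0).
  { apply (lim_bounded_partial_sums _ _ (PI * (9 * t ^ 2 * exp (Rabs t * PI))) HL).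
    intros N. pose proof PI_RGT_0.
    replace (PI * _) with ((PI - 0) * (9 * t ^ 2 * exp (Rabs t * PI))) by ring.
    refine (norm_RInt_le_const _ 0 PI _ _ ltac:(lra) _ (is_RInt_cosh_fejer t N)).
    intros y Hy. apply cosh_fejer_bound. lra. }
  apply is_lim_seq_ext with
    (u := fun N => / C * (sum_f_R0 (cosh_cos_coef t) N + sum_f_R0 (tg_alt (fun n => / hodd n)) N)).
  { intros N. rewrite <- plus_sum, scal_sum.
    apply sum_eq. intros n _. rewrite sech_term_split. fold C. ring. }
  replace (PI * sigma0 t) with (/ C * (L + PI / 2))
    by (rewrite HL0; unfold sigma0; fold C; field; lra).
  apply (is_lim_seq_scal_l _ _ (L + PI / 2)).
  apply is_lim_seq_plus'; [exact HL | apply is_lim_alt_inv_hodd].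
Qed.

Definition sum_first (f : nat -> R) (N : nat) : R :=
  match N with O => 0 | S k => sum_f_R0 f k end.

Lemma sum_first_S f N : sum_first f (S N) = sum_first f N + f N.
Proof. destruct N; simpl; [ring | reflexivity]. Qed.

Lemma sum_f_R0_tg_alt_shift (w : nat -> R) N k :
  sum_f_R0 (tg_alt w) (N + k)
  = sum_first (tg_alt w) N + (-1) ^ N * sum_f_R0 (tg_alt (fun i => w (N + i)%nat)) k.
Proof.
  induction k as [|k IH].
  - rewrite Nat.add_0_r. change (sum_f_R0 (tg_alt w) N) with (sum_first (tg_alt w) (S N)).
    rewrite sum_first_S. unfold tg_alt. simpl. rewrite Nat.add_0_r. ring.
  - rewrite Nat.add_succ_r, tech5, IH, tech5. unfold tg_alt.
    rewrite <- Nat.add_succ_r, pow_add. ring.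
Qed.

Lemma alternated_series_remainder (w : nat -> R) (l : R) N :
  (forall i, (N <= i)%nat -> w (S i) <= w i) -> is_lim_seq w 0 ->
  is_lim_seq (sum_f_R0 (tg_alt w)) l ->
  Rabs (l - sum_first (tg_alt w) N) <= w N.
Proof.
  intros Hdec Hw Hl.
  set (v := fun i => w (N + i)%nat).
  assert (Hvdec : Un_decreasing v).
  { intros i. unfold v. rewrite Nat.add_succ_r. apply Hdec. lia. }
  assert (Hv : Un_cv v 0).
  { apply is_lim_seq_Reals. apply (is_lim_seq_incr_n w N) in Hw.
    eapply is_lim_seq_ext; [|exact Hw]. intros i. unfold v. now rewrite Nat.add_comm. }
  destruct (alternated_series v Hvdec Hv) as [lv Hlv].
  pose proof (alternated_series_ineq v lv 0 Hvdec Hv Hlv) as Hineq.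
  simpl in Hineq. unfold tg_alt in Hineq. simpl in Hineq.
  pose proof (Hvdec 0%nat) as Hv0.
  assert (Hsplit : l = sum_first (tg_alt w) N + (-1) ^ N * lv).
  { apply is_lim_seq_Reals, (is_lim_seq_scal_l _ ((-1) ^ N)) in Hlv.
    apply (is_lim_seq_plus' (fun _ => sum_first (tg_alt w) N) _ _ _ (is_lim_seq_const _)) in Hlv.
    apply (is_lim_seq_incr_n _ N) in Hl.
    apply (is_lim_seq_unique _ _) in Hl. apply is_lim_seq_unique in Hlv.
    rewrite (Lim_seq_ext _ (fun n => sum_first (tg_alt w) N + (-1) ^ N * sum_f_R0 (tg_alt v) n)) in Hl.
    - rewrite Hlv in Hl. now injection Hl.
    - intros n. rewrite Nat.add_comm. apply sum_f_R0_tg_alt_shift. }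
  rewrite Hsplit. replace (sum_first (tg_alt w) N + (-1) ^ N * lv - sum_first (tg_alt w) N)
    with ((-1) ^ N * lv) by ring.
  rewrite Rabs_mult, pow_1_abs, Rmult_1_l.
  unfold v in *. rewrite Nat.add_0_r in Hineq, Hv0.
  apply Rabs_le. lra.
Qed.

Lemma sech_term_bound t n : 0 <= sech_term t n <= / hodd n.
Proof.
  unfold sech_term. pose proof (hodd_pos n).
  split.
  - apply Rmult_le_pos; [lra | apply Rlt_le, Rinv_0_lt_compat; nra].
  - apply Rmult_le_reg_l with (hodd n ^ 2 + t ^ 2); [nra|].
    field_simplify; try lra; try nra.
    apply Rmult_le_reg_r with (hodd n); [lra|]. field_simplify; nra.
Qed.

Lemma sech_term_le_half t n : 0 < Rabs t -> sech_term t n <= / (2 * Rabs t).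
Proof.
  intros Ht. unfold sech_term. pose proof (hodd_pos n).
  rewrite <- (pow2_abs t). set (b := Rabs t) in *.
  apply Rmult_le_reg_l with ((hodd n ^ 2 + b ^ 2) * (2 * b)); [apply Rmult_lt_0_compat; nra|].
  field_simplify; try (intro; nra). pose proof (pow2_ge_0 (hodd n - b)). nra.
Qed.

Lemma sech_tail_small t N : Rabs t <= hodd N ->
  Rabs (PI * sigma0 t - sum_first (tg_alt (sech_term t)) N) <= / hodd N.
Proof.
  intros Ht. eapply Rle_trans; [apply alternated_series_remainder|apply sech_term_bound].
  - intros i Hi. unfold sech_term. rewrite hodd_S.
    set (a := hodd i).
    assert (HaN : hodd N <= a) by (unfold a, hodd; apply le_INR in Hi; lra).
    pose proof (hodd_pos N).
    assert (t ^ 2 <= a ^ 2).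
    { rewrite <- (pow2_abs t). apply pow_incr. split; [apply Rabs_pos | lra]. }
    apply Rmult_le_reg_l with (((a + 1) ^ 2 + t ^ 2) * (a ^ 2 + t ^ 2)); [nra|].
    field_simplify; nra.
  - apply is_lim_seq_le_le_loc with (u := fun _ => 0) (w := fun i => / INR i).
    + exists 1%nat. intros i Hi. destruct (sech_term_bound t i) as [G0 G1].
      split; [lra|]. eapply Rle_trans; [exact G1|].
      apply Rinv_le_contravar; [apply lt_0_INR; lia | unfold hodd; lra].
    + apply is_lim_seq_const.
    + apply is_lim_inv_INR.
  - apply sech_partial_fractions.
Qed.

Lemma sum_first_sech_bound t N : 0 < Rabs t ->
  Rabs (sum_first (tg_alt (sech_term t)) N) <= INR N / (2 * Rabs t).
Proof.
  intros Ht. induction N as [|N IH].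
  - simpl. rewrite Rabs_R0. unfold Rdiv. rewrite Rmult_0_l. lra.
  - rewrite sum_first_S, S_INR.
    eapply Rle_trans; [apply Rabs_triang|].
    unfold tg_alt at 2. rewrite Rabs_mult, pow_1_abs, Rmult_1_l.
    destruct (sech_term_bound t N).
    rewrite (Rabs_pos_eq (sech_term t N)) by lra.
    pose proof (sech_term_le_half t N Ht).
    replace ((INR N + 1) / (2 * Rabs t)) with (INR N / (2 * Rabs t) + / (2 * Rabs t))
      by (field; lra).
    lra.
Qed.

Lemma PI_sigma0_bound t : 0 < PI * sigma0 t <= 2.
Proof.
  unfold sigma0. pose proof (cosh_ge_1 (PI * t)). pose proof PI_4. pose proof PI_RGT_0.
  split.
  - apply Rmult_lt_0_compat; [lra | apply Rinv_0_lt_compat; lra].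
  - apply Rmult_le_reg_l with (2 * cosh (PI * t)); [lra|]. field_simplify; lra.
Qed.

Lemma sech_tail_bound t N :
  Rabs (PI * sigma0 t - sum_first (tg_alt (sech_term t)) N)
  <= / hodd N + 6 * (t ^ 2 / (t ^ 2 + hodd N ^ 2)).
Proof.
  pose proof (hodd_pos N) as HaN.
  assert (H6 : 0 <= 6 * (t ^ 2 / (t ^ 2 + hodd N ^ 2))).
  { apply Rmult_le_pos; [lra|]. apply Rmult_le_pos; [nra | apply Rlt_le, Rinv_0_lt_compat; nra]. }
  assert (Hi : 0 < / hodd N) by (apply Rinv_0_lt_compat; lra).
  destruct (Rle_dec (Rabs t) (hodd N)) as [Hs|Hb].
  - pose proof (sech_tail_small t N Hs). lra.
  - apply Rnot_le_lt in Hb.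
    assert (Ht : 0 < Rabs t) by lra.
    pose proof (sum_first_sech_bound t N Ht).
    assert (INR N / (2 * Rabs t) <= 1).
    { apply Rmult_le_reg_l with (2 * Rabs t); [lra|]. field_simplify; [|lra].
      unfold hodd in Hb. lra. }
    assert (3 <= 6 * (t ^ 2 / (t ^ 2 + hodd N ^ 2))).
    { assert (hodd N ^ 2 <= t ^ 2) by (rewrite <- (pow2_abs t); apply pow_incr; lra).
      apply Rmult_le_reg_l with (t ^ 2 + hodd N ^ 2); [nra|].
      field_simplify; try (intro; nra); nra. }
    pose proof (PI_sigma0_bound t).
    eapply Rle_trans; [apply Rabs_triang|]. rewrite Rabs_Ropp, (Rabs_pos_eq (PI * sigma0 t)) by lra.
    lra.
Qed.

(* Coquelicot states such equalities in [NormedModule.sort _]; [ring] and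
   [field] only recognize them at type [R]. *)
Ltac change_to_R_eq := match goal with |- ?u = ?v => change (@eq R u v) end.

Notation is_RInt_R f l := (is_RInt_gen f (Rbar_locally m_infty) (Rbar_locally p_infty) l).

Lemma is_RInt_R_antiderivative (f A : R -> R) (la lb : R) :
  (forall x, is_derive A x (f x)) -> (forall x, continuous f x) ->
  is_lim A m_infty la -> is_lim A p_infty lb ->
  is_RInt_R f (lb - la).
Proof.
  intros HD HC Hm Hp.
  assert (HDe : forall x, Derive A x = f x) by (intros; apply is_derive_unique, HD).
  apply (is_RInt_gen_ext (Derive A)).
  { apply filter_forall. intros ab x _. apply HDe. }
  apply is_RInt_gen_Derive; [| |exact Hm|exact Hp].
  - apply filter_forall. intros ab x _. eexists. apply HD.
  - apply filter_forall. intros ab x _. eapply continuous_ext; [|apply HC].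
    intros y. symmetry. apply HDe.
Qed.

Lemma is_RInt_R_0 : is_RInt_R (fun _ => 0) 0.
Proof.
  pose proof (is_RInt_R_antiderivative (fun _ => 0) (fun _ => 0) 0 0
    (fun x => is_derive_const 0 x) (fun x => continuous_const 0 x)
    (is_lim_const 0 m_infty) (is_lim_const 0 p_infty)) as H.
  now rewrite Rminus_diag in H.
Qed.

Lemma is_lim_odd_m_infty (f : R -> R) (l : R) :
  (forall x, f (- x) = - f x) -> is_lim f p_infty l -> is_lim f m_infty (- l).
Proof.
  intros Hodd Hl.
  apply is_lim_ext with (f := fun x => - f (- x)).
  { intros x. rewrite Hodd. ring. }
  replace (Finite (- l)) with (Rbar_opp l) by reflexivity.
  apply is_lim_opp, (is_lim_comp f (fun x => - x) m_infty l p_infty Hl).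
  - replace p_infty with (Rbar_opp m_infty) by reflexivity. apply is_lim_opp, is_lim_id.
  - exists 0. intros x _. discriminate.
Qed.

Lemma is_lim_atan_p_infty : is_lim atan p_infty (PI / 2).
Proof.
  apply is_lim_ext_loc with (f := fun x => PI / 2 - atan (/ x)).
  { exists 0. intros x Hx. rewrite atan_inv by lra. ring. }
  assert (H : is_lim (fun x => PI / 2 - atan (/ x)) p_infty (PI / 2 - atan 0)).
  { apply is_lim_minus'; [apply is_lim_const|].
    apply (is_lim_comp_continuous (fun x => / x) atan p_infty 0).
    - replace (Finite 0) with (Rbar_inv p_infty) by reflexivity.
      apply is_lim_inv; [apply is_lim_id | discriminate].
    - apply continuous_atan. }
  now rewrite atan_0, Rminus_0_r in H.
Qed.

Lemma is_lim_atan_div_p_infty c : 0 < c -> is_lim (fun x => atan (x / c)) p_infty (PI / 2).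
Proof.
  intros Hc. apply (is_lim_comp atan (fun x => x / c) p_infty (PI / 2) p_infty).
  - apply is_lim_atan_p_infty.
  - pose proof (Rinv_0_lt_compat c Hc) as Hc'.
    replace p_infty with (Rbar_mult p_infty (/ c)) at 2.
    + apply is_lim_scal_r, is_lim_id.
    + simpl. destruct (Rle_dec 0 (/ c)) as [H|H]; [|lra].
      destruct (Rle_lt_or_eq_dec 0 (/ c) H); [reflexivity | lra].
  - exists 0. intros x _. discriminate.
Qed.

Lemma is_lim_atan_div_m_infty c : 0 < c -> is_lim (fun x => atan (x / c)) m_infty (- (PI / 2)).
Proof.
  intros Hc. apply is_lim_odd_m_infty; [|now apply is_lim_atan_div_p_infty].
  intros x. rewrite <- atan_opp. f_equal. field. lra.
Qed.

Lemma is_lim_rat_p_infty a : 0 < a -> is_lim (fun l => l / (l ^ 2 + a ^ 2)) p_infty 0.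
Proof.
  intros Ha. apply (is_lim_le_le_loc (fun _ => 0) (fun y => / y)).
  - exists 0. intros y Hy. split.
    + apply Rmult_le_pos; [lra | apply Rlt_le, Rinv_0_lt_compat; nra].
    + apply Rmult_le_reg_l with (y * (y ^ 2 + a ^ 2)); [apply Rmult_lt_0_compat; nra|].
      field_simplify; try (intro; nra). nra.
  - apply is_lim_const.
  - replace (Finite 0) with (Rbar_inv p_infty) by reflexivity.
    apply is_lim_inv; [apply is_lim_id | discriminate].
Qed.

Lemma is_lim_rat_m_infty a : 0 < a -> is_lim (fun l => l / (l ^ 2 + a ^ 2)) m_infty 0.
Proof.
  intros Ha. rewrite <- Ropp_0. apply is_lim_odd_m_infty; [|now apply is_lim_rat_p_infty].
  intros x. field. nra.
Qed.

(* Antiderivative by partial fractions; for [a = x] the second-order pole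
   contributes the rational part. *)
Lemma is_RInt_R_cauchy_product a x : 0 < a -> 0 < x ->
  is_RInt_R (fun l => a / (a ^ 2 + l ^ 2) * (2 * x / (l ^ 2 + x ^ 2))) (2 * PI / (a + x)).
Proof.
  intros Ha Hx.
  assert (HC : forall l, continuous (fun l => a / (a ^ 2 + l ^ 2) * (2 * x / (l ^ 2 + x ^ 2))) l).
  { intros l. apply (@ex_derive_continuous R_AbsRing R_NormedModule). auto_derive. nra. }
  destruct (Req_dec a x) as [<-|Hax].
  - replace (2 * PI / (a + a)) with (PI / 2 / a - - (PI / 2) / a) by (field; lra).
    apply (is_RInt_R_antiderivative _ (fun l => l / (l ^ 2 + a ^ 2) + atan (l / a) / a)); auto.
    + intros l. auto_derive; [intro; nra|]. field. repeat split; try lra; intro; nra.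
    + replace (- (PI / 2) / a) with (0 + - (PI / 2) / a) by ring.
      apply is_lim_plus'; [now apply is_lim_rat_m_infty|].
      apply (is_lim_scal_r (fun l => atan (l / a)) (/ a) m_infty (- (PI / 2))).
      now apply is_lim_atan_div_m_infty.
    + replace (PI / 2 / a) with (0 + PI / 2 / a) by ring.
      apply is_lim_plus'; [now apply is_lim_rat_p_infty|].
      apply (is_lim_scal_r (fun l => atan (l / a)) (/ a) p_infty (PI / 2)).
      now apply is_lim_atan_div_p_infty.
  - assert (Hd : x ^ 2 - a ^ 2 <> 0).
    { intro H. assert ((x - a) * (x + a) = 0) by (rewrite <- H; ring).
      destruct (Rmult_integral _ _ H0); lra. }
    set (k := 2 / (x ^ 2 - a ^ 2)).
    replace (2 * PI / (a + x)) with (k * (x * (PI / 2) - a * (PI / 2))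
                                     - k * (x * - (PI / 2) - a * - (PI / 2)))
      by (unfold k; field; split; [lra | auto]).
    apply (is_RInt_R_antiderivative _ (fun l => k * (x * atan (l / a) - a * atan (l / x)))); auto.
    + intros l. unfold k. auto_derive; [repeat split; try lra; intro; nra|].
      field. repeat split; try lra; try (intro; nra); auto.
    + apply (is_lim_scal_l _ k m_infty (x * - (PI / 2) - a * - (PI / 2))).
      apply is_lim_minus'.
      * apply (is_lim_scal_l _ x m_infty (- (PI / 2))). now apply is_lim_atan_div_m_infty.
      * apply (is_lim_scal_l _ a m_infty (- (PI / 2))). now apply is_lim_atan_div_m_infty.
    + apply (is_lim_scal_l _ k p_infty (x * (PI / 2) - a * (PI / 2))).
      apply is_lim_minus'.
      * apply (is_lim_scal_l _ x p_infty (PI / 2)). now apply is_lim_atan_div_p_infty.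
      * apply (is_lim_scal_l _ a p_infty (PI / 2)). now apply is_lim_atan_div_p_infty.
Qed.

Definition lorentz (x l : R) : R := 2 * x / (l ^ 2 + x ^ 2).

Lemma lorentz_pos x l : 0 < x -> 0 < lorentz x l.
Proof. intros. unfold lorentz. apply Rdiv_lt_0_compat; nra. Qed.

Lemma continuous_sigma0_lorentz x l : 0 < x -> continuous (fun l => sigma0 l * lorentz x l) l.
Proof.
  intros Hx. apply (@ex_derive_continuous R_AbsRing R_NormedModule).
  unfold sigma0, cosh, lorentz. auto_derive.
  pose proof (exp_pos (PI * l)). pose proof (exp_pos (- (PI * l))).
  repeat split; intro; nra.
Qed.

Lemma ex_RInt_sigma0_lorentz x a b : 0 < x -> ex_RInt (fun l => sigma0 l * lorentz x l) a b.
Proof.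
  intros Hx. apply (@ex_RInt_continuous R_CompleteNormedModule).
  intros z _. now apply continuous_sigma0_lorentz.
Qed.

Definition sigma0_lorentz_approx (N : nat) (x l : R) : R :=
  sum_first (tg_alt (sech_term l)) N / PI * lorentz x l.

Definition alt_hodd_sum (N : nat) (x : R) : R :=
  sum_first (fun n => (-1) ^ n * (2 / (hodd n + x))) N.

Lemma is_RInt_R_sigma0_lorentz_approx N x : 0 < x ->
  is_RInt_R (sigma0_lorentz_approx N x) (alt_hodd_sum N x).
Proof.
  intros Hx. induction N as [|N IH].
  - eapply is_RInt_gen_ext; [|exact is_RInt_R_0].
    apply filter_forall. intros ab y _. unfold sigma0_lorentz_approx. simpl. field.
    apply PI_neq0.
  - pose proof (is_RInt_gen_scal _ ((-1) ^ N / PI) _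
                  (is_RInt_R_cauchy_product (hodd N) x (hodd_pos N) Hx)) as H.
    pose proof (is_RInt_gen_plus _ _ _ _ IH H) as H2.
    replace (alt_hodd_sum (S N) x)
      with (plus (alt_hodd_sum N x) (scal ((-1) ^ N / PI) (2 * PI / (hodd N + x)))).
    + eapply is_RInt_gen_ext; [|exact H2].
      apply filter_forall. intros ab y _.
      unfold sigma0_lorentz_approx, lorentz. rewrite sum_first_S.
      change (plus ?u ?v) with (u + v). change (scal ?k ?z) with (k * z).
      change_to_R_eq.
      unfold sech_term, tg_alt. pose proof PI_RGT_0. pose proof (hodd_pos N).
      field. repeat split; try lra; intro; nra.
    + unfold alt_hodd_sum. rewrite sum_first_S.
      change (plus ?u ?v) with (u + v). change (scal ?k ?z) with (k * z).
      change_to_R_eq.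
      pose proof PI_RGT_0. pose proof (hodd_pos N). field. lra.
Qed.

Definition sigma0_lorentz_error (N : nat) (x l : R) : R :=
  / PI * (/ hodd N * lorentz x l + 12 * x / (l ^ 2 + hodd N ^ 2)).

Lemma sigma0_lorentz_approx_error N x l : 0 < x ->
  Rabs (sigma0 l * lorentz x l - sigma0_lorentz_approx N x l) <= sigma0_lorentz_error N x l.
Proof.
  intros Hx. pose proof PI_RGT_0. pose proof (hodd_pos N). pose proof (lorentz_pos x l Hx).
  set (A := hodd N) in *.
  unfold sigma0_lorentz_approx.
  replace (sigma0 l * lorentz x l - sum_first (tg_alt (sech_term l)) N / PI * lorentz x l)
    with ((PI * sigma0 l - sum_first (tg_alt (sech_term l)) N) * (/ PI * lorentz x l))
    by (field; lra).
  rewrite Rabs_mult, (Rabs_pos_eq (/ PI * lorentz x l))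
    by (apply Rmult_le_pos; [apply Rlt_le, Rinv_0_lt_compat|]; lra).
  assert (Hpos : 0 <= / PI * lorentz x l)
    by (apply Rmult_le_pos; [apply Rlt_le, Rinv_0_lt_compat|]; lra).
  eapply Rle_trans; [apply Rmult_le_compat_r; [exact Hpos | apply sech_tail_bound]|].
  fold A. unfold sigma0_lorentz_error. fold A.
  assert (Hk : 6 * (l ^ 2 / (l ^ 2 + A ^ 2)) * lorentz x l <= 12 * x / (l ^ 2 + A ^ 2)).
  { unfold lorentz.
    replace (6 * (l ^ 2 / (l ^ 2 + A ^ 2)) * (2 * x / (l ^ 2 + x ^ 2)))
      with (12 * x / (l ^ 2 + A ^ 2) * (l ^ 2 / (l ^ 2 + x ^ 2))) by (field; split; nra).
    rewrite <- (Rmult_1_r (12 * x / (l ^ 2 + A ^ 2))) at 2.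
    apply Rmult_le_compat_l.
    - apply Rmult_le_pos; [lra | apply Rlt_le, Rinv_0_lt_compat; nra].
    - apply Rmult_le_reg_r with (l ^ 2 + x ^ 2); [nra|]. field_simplify; try (intro; nra). nra. }
  replace ((/ A + 6 * (l ^ 2 / (l ^ 2 + A ^ 2))) * (/ PI * lorentz x l))
    with (/ PI * (/ A * lorentz x l + 6 * (l ^ 2 / (l ^ 2 + A ^ 2)) * lorentz x l)) by ring.
  apply Rmult_le_compat_l; [apply Rlt_le, Rinv_0_lt_compat|]; lra.
Qed.

Lemma atan_le_atan u v : u <= v -> atan u <= atan v.
Proof. intros [H|H]; [left; now apply atan_increasing | rewrite H; lra]. Qed.

Lemma RInt_sigma0_lorentz_error_le N x a b : 0 < x -> a <= b ->
  RInt (sigma0_lorentz_error N x) a b <= (2 + 12 * x) / hodd N.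
Proof.
  intros Hx Hab. pose proof PI_RGT_0. pose proof (hodd_pos N). set (A := hodd N) in *.
  set (G := fun l => / PI * (/ A * (2 * atan (l / x)) + 12 * x / A * atan (l / A))).
  replace (RInt (sigma0_lorentz_error N x) a b) with (G b - G a).
  2: { symmetry. apply is_RInt_unique, (@is_RInt_derive R_CompleteNormedModule).
       - intros l _. unfold G, sigma0_lorentz_error, lorentz. fold A. auto_derive; [lra|].
         field. repeat split; try lra; try (intro; nra).
       - intros l _. apply (@ex_derive_continuous R_AbsRing R_NormedModule).
         unfold sigma0_lorentz_error, lorentz. fold A. auto_derive.
         repeat split; try lra; try (intro; nra). }
  assert (atan (a / x) <= atan (b / x))
    by (apply atan_le_atan; unfold Rdiv; apply Rmult_le_compat_r;
        [apply Rlt_le, Rinv_0_lt_compat|]; lra).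
  assert (atan (a / A) <= atan (b / A))
    by (apply atan_le_atan; unfold Rdiv; apply Rmult_le_compat_r;
        [apply Rlt_le, Rinv_0_lt_compat|]; lra).
  pose proof (atan_bound (b / x)). pose proof (atan_bound (a / x)).
  pose proof (atan_bound (b / A)). pose proof (atan_bound (a / A)).
  unfold G.
  replace (/ PI * (/ A * (2 * atan (b / x)) + 12 * x / A * atan (b / A))
           - / PI * (/ A * (2 * atan (a / x)) + 12 * x / A * atan (a / A)))
    with (/ PI * / A * (2 * (atan (b / x) - atan (a / x))
                        + 12 * x * (atan (b / A) - atan (a / A)))) by (field; lra).
  replace ((2 + 12 * x) / A) with (/ PI * / A * (2 * PI + 12 * x * PI)) by (field; lra).
  apply Rmult_le_compat_l; [apply Rmult_le_pos; apply Rlt_le, Rinv_0_lt_compat; lra|].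
  assert (12 * x * (atan (b / A) - atan (a / A)) <= 12 * x * PI)
    by (apply Rmult_le_compat_l; lra).
  lra.
Qed.

Lemma RInt_sigma0_lorentz_approx_error N x a b y : 0 < x -> a <= b ->
  is_RInt (sigma0_lorentz_approx N x) a b y ->
  Rabs (RInt (fun l => sigma0 l * lorentz x l) a b - y) <= (2 + 12 * x) / hodd N.
Proof.
  intros Hx Hab Hy.
  pose proof (is_RInt_minus _ _ _ _ _ _
                (RInt_correct _ _ _ (ex_RInt_sigma0_lorentz x a b Hx)) Hy) as Hd.
  eapply Rle_trans; [|apply (RInt_sigma0_lorentz_error_le N x a b Hx Hab)].
  refine (norm_RInt_le _ _ a b _ _ Hab _ Hd (RInt_correct _ _ _ _)).
  - intros l _. now apply sigma0_lorentz_approx_error.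
  - apply (@ex_RInt_continuous R_CompleteNormedModule). intros l _.
    apply (@ex_derive_continuous R_AbsRing R_NormedModule).
    unfold sigma0_lorentz_error, lorentz. pose proof (hodd_pos N). pose proof PI_RGT_0.
    auto_derive. repeat split; try lra; intro; nra.
Qed.

Lemma is_RInt_R_sigma0_lorentz_approx_lim x V : 0 < x ->
  (forall eps, 0 < eps -> exists N,
     (2 + 12 * x) / hodd N < eps /\ Rabs (alt_hodd_sum N x - V) < eps) ->
  is_RInt_R (fun l => sigma0 l * lorentz x l) V.
Proof.
  intros Hx Happ P [eps HP].
  assert (He3 : 0 < eps / 3) by (pose proof (cond_pos eps); lra).
  destruct (Happ (eps / 3) He3) as [N [HN HW]].
  pose proof (is_RInt_R_sigma0_lorentz_approx N x Hx
                (ball (alt_hodd_sum N x) (mkposreal _ He3)) (locally_ball _ _)) as HG.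
  unfold filtermapi in HG |- *.
  assert (Hab : filter_prod (Rbar_locally m_infty) (Rbar_locally p_infty)
                  (fun ab : R * R => fst ab <= snd ab)).
  { apply (Filter_prod _ _ _ (fun a => a < 0) (fun b => 0 < b)); [exists 0; auto | exists 0; auto|].
    intros a b Ha Hb. simpl. lra. }
  eapply filter_imp; [|exact (filter_and _ _ HG Hab)].
  intros [a b] [[y [Hy Hball]] Hle]. simpl in *.
  exists (RInt (fun l => sigma0 l * lorentz x l) a b).
  split; [apply (@RInt_correct R_CompleteNormedModule), ex_RInt_sigma0_lorentz, Hx|].
  apply HP. change (Rabs (RInt (fun l => sigma0 l * lorentz x l) a b - V) < eps).
  change (Rabs (y - alt_hodd_sum N x) < eps / 3) in Hball.
  pose proof (RInt_sigma0_lorentz_approx_error N x a b y Hx Hle Hy) as Herr.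
  apply Rabs_lt_between'. apply Rabs_le_between' in Herr. apply Rabs_lt_between' in Hball.
  apply Rabs_lt_between' in HW. lra.
Qed.

Lemma ex_series_digamma c : 0 < c -> ex_series (fun n => / (INR n + 1) - / (INR n + c)).
Proof.
  intros Hc. set (m := Rmin 1 c).
  assert (Hm : 0 < m) by (unfold m; apply Rmin_glb_lt; lra).
  assert (Hm1 : m <= 1) by apply Rmin_l. assert (Hmc : m <= c) by apply Rmin_r.
  apply (@ex_series_le R_AbsRing R_CompleteNormedModule _
           (fun n => Rabs (c - 1) / m * / (INR n + 1) ^ 2)).
  - intros n. change (Rabs (/ (INR n + 1) - / (INR n + c)) <= Rabs (c - 1) / m * / (INR n + 1) ^ 2).
    pose proof (pos_INR n).
    replace (/ (INR n + 1) - / (INR n + c)) with ((c - 1) * / ((INR n + 1) * (INR n + c)))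
      by (field; lra).
    rewrite Rabs_mult, (Rabs_pos_eq (/ ((INR n + 1) * (INR n + c))))
      by (apply Rlt_le, Rinv_0_lt_compat; nra).
    unfold Rdiv. rewrite Rmult_assoc. apply Rmult_le_compat_l; [apply Rabs_pos|].
    rewrite <- Rinv_mult. apply Rinv_le_contravar; [nra|].
    assert (m * (INR n + 1) <= INR n + c) by nra.
    nra.
  - apply (@ex_series_scal_l R_AbsRing R_NormedModule), ex_series_inv_sq.
Qed.

Lemma digamma_sub a b : 0 < a -> 0 < b ->
  digamma b - digamma a = Series (fun n => / (INR n + a) - / (INR n + b)).
Proof.
  intros Ha Hb. unfold digamma.
  replace (- euler_gamma + Series (fun n => / (INR n + 1) - / (INR n + b))
           - (- euler_gamma + Series (fun n => / (INR n + 1) - / (INR n + a))))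
    with (Series (fun n => / (INR n + 1) - / (INR n + b))
          - Series (fun n => / (INR n + 1) - / (INR n + a))) by ring.
  rewrite <- Series_minus by (apply ex_series_digamma; assumption).
  apply Series_ext. intros n. ring.
Qed.

(* Pairing consecutive terms: [2/(2m + 1/2 + x) - 2/(2m + 3/2 + x)]. *)
Lemma alt_hodd_sum_even x M : 0 < x ->
  alt_hodd_sum (2 * M) x
  = sum_first (fun m => / (INR m + (x / 2 + / 4)) - / (INR m + (x / 2 + 3 / 4))) M.
Proof.
  intros Hx. induction M as [|M IH]; [reflexivity|].
  replace (2 * S M)%nat with (S (S (2 * M))) by lia.
  unfold alt_hodd_sum in *. rewrite !sum_first_S, IH.
  rewrite pow_1_odd, pow_1_even. unfold hodd. rewrite S_INR, mult_INR.
  simpl. pose proof (pos_INR M). field. split; lra.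
Qed.

Lemma alt_hodd_sum_approx x : 0 < x -> forall eps, 0 < eps -> exists N,
  (2 + 12 * x) / hodd N < eps
  /\ Rabs (alt_hodd_sum N x - (digamma (x / 2 + 3 / 4) - digamma (x / 2 + / 4))) < eps.
Proof.
  intros Hx eps He.
  set (w := fun m => / (INR m + (x / 2 + / 4)) - / (INR m + (x / 2 + 3 / 4))).
  rewrite (digamma_sub (x / 2 + / 4)) by lra. fold w.
  assert (HS : is_lim_seq (sum_n w) (Series w)).
  { apply Series_correct.
    apply ex_series_ext with
      (a := fun n => (/ (INR n + 1) - / (INR n + (x / 2 + 3 / 4)))
                     - (/ (INR n + 1) - / (INR n + (x / 2 + / 4)))).
    - intros n. unfold w. change_to_R_eq. ring.
    - apply (@ex_series_minus R_AbsRing R_NormedModule); apply ex_series_digamma; lra. }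
  apply is_lim_seq_spec in HS. specialize (HS (mkposreal _ He)). simpl in HS.
  pose proof is_lim_seq_INR as HI. apply is_lim_seq_spec in HI.
  specialize (HI ((2 + 12 * x) / eps)).
  destruct (filter_and _ _ HS HI) as [N0 HN0].
  destruct (HN0 N0 (le_n _)) as [Hs Hi].
  exists (2 * S N0)%nat. split.
  - assert (HaN : INR N0 < hodd (2 * S N0)).
    { unfold hodd. rewrite mult_INR, !S_INR. simpl. pose proof (pos_INR N0). lra. }
    pose proof (hodd_pos (2 * S N0)).
    apply Rmult_lt_reg_r with (hodd (2 * S N0)); [lra|].
    unfold Rdiv. rewrite Rmult_assoc, Rinv_l, Rmult_1_r by lra.
    replace (2 + 12 * x) with (eps * ((2 + 12 * x) / eps)) by (field; lra).
    apply Rmult_lt_compat_l; lra.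
  - rewrite alt_hodd_sum_even by exact Hx. simpl. rewrite <- sum_n_Reals. exact Hs.
Qed.

Lemma is_RInt_R_sigma0_fx_pos x : 0 < x ->
  is_RInt_R (fun l => sigma0 l * fx x l) (digamma (x / 2 + 3 / 4) - digamma (x / 2 + / 4)).
Proof.
  intros Hx. apply (is_RInt_gen_ext (fun l => sigma0 l * lorentz x l)).
  - apply filter_forall. intros ab l _. unfold fx, lorentz.
    destruct (Req_EM_T x 0); [lra | reflexivity].
  - apply is_RInt_R_sigma0_lorentz_approx_lim; [exact Hx|]. now apply alt_hodd_sum_approx.
Qed.

Definition digamma_abs (y : R) : R := digamma (Rabs y / 2 + / 2).

(* Both sides are odd in [x]; for [0 < x < 1/2] the right-hand side would be wrong. *)
Lemma is_RInt_R_sigma0_fx x : x = 0 \/ / 2 <= Rabs x ->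
  is_RInt_R (fun l => sigma0 l * fx x l) (digamma_abs (x + / 2) - digamma_abs (x - / 2)).
Proof.
  unfold digamma_abs. intros [->|Hx].
  - rewrite Rplus_0_l, Rminus_0_l, Rabs_Ropp, Rminus_diag.
    eapply is_RInt_gen_ext; [|exact is_RInt_R_0].
    apply filter_forall. intros ab l _. change_to_R_eq. unfold fx.
    destruct (Req_EM_T 0 0); [ring | lra].
  - destruct (Rle_lt_dec 0 x) as [Hp|Hn].
    + rewrite Rabs_pos_eq in Hx by lra.
      rewrite !Rabs_pos_eq by lra.
      replace ((x + / 2) / 2 + / 2) with (x / 2 + 3 / 4) by field.
      replace ((x - / 2) / 2 + / 2) with (x / 2 + / 4) by field.
      apply is_RInt_R_sigma0_fx_pos. lra.
    + rewrite Rabs_left in Hx by lra.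
      rewrite !Rabs_left1 by lra.
      replace (- (x + / 2) / 2 + / 2) with (- x / 2 + / 4) by field.
      replace (- (x - / 2) / 2 + / 2) with (- x / 2 + 3 / 4) by field.
      assert (Hx' : 0 < - x) by lra.
      pose proof (is_RInt_gen_opp _ _ (is_RInt_R_sigma0_fx_pos (- x) Hx')) as H.
      change (opp ?z) with (- z) in H.
      replace (digamma (- x / 2 + / 4) - digamma (- x / 2 + 3 / 4))
        with (- (digamma (- x / 2 + 3 / 4) - digamma (- x / 2 + / 4))) by ring.
      eapply is_RInt_gen_ext; [|exact H].
      apply filter_forall. intros ab l _. change_to_R_eq.
      unfold fx. destruct (Req_EM_T (- x) 0); destruct (Req_EM_T x 0); try lra.
      field. nra.
Qed.

Lemma half_IZR_cases (m : Z) : IZR m / 2 = 0 \/ / 2 <= Rabs (IZR m / 2).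
Proof.
  destruct (Z.eq_dec m 0) as [->|Hm]; [left; field|right].
  assert (1 <= Rabs (IZR m)) by (rewrite <- abs_IZR; apply IZR_le; lia).
  unfold Rdiv. rewrite Rabs_mult, (Rabs_pos_eq (/ 2)) by lra. lra.
Qed.

Lemma lsum_ext {A : Type} (F G : A -> R) l : (forall a, F a = G a) -> lsum F l = lsum G l.
Proof. intros H. unfold lsum. induction l as [|a l IH]; simpl; [|rewrite H, IH]; reflexivity. Qed.

Lemma is_RInt_R_lsum {A : Type} (F : A -> R -> R) (I : A -> R) (l : list A) :
  (forall a, In a l -> is_RInt_R (F a) (I a)) ->
  is_RInt_R (fun y => lsum (fun a => F a y) l) (lsum I l).
Proof.
  induction l as [|a l IH]; intros H.
  - exact is_RInt_R_0.
  - apply (is_RInt_gen_plus _ _ _ _ (H a (in_eq a l))).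
    apply IH. intros b Hb. apply H, in_cons, Hb.
Qed.

Lemma lsum_seq_telescope (g : nat -> R) s n :
  lsum (fun k => g (S k) - g k) (seq s n) = g (s + n)%nat - g s.
Proof.
  revert s. induction n as [|n IH]; intros s; unfold lsum in *; simpl.
  - rewrite Nat.add_0_r. ring.
  - rewrite IH, Nat.add_succ_r. simpl. ring.
Qed.

(* The [k]-th string member [alpha + twos/2] of [Psi twos' twos], with
   [alpha = - twos'/2 + 1/2 + k]. *)
Definition string_center (twos' twos k : nat) : R := - half twos' + / 2 + INR k + INR twos / 2.

Lemma string_center_IZR twos' twos k :
  string_center twos' twos k
  = IZR (Z.of_nat twos + 2 * Z.of_nat k + 1 - Z.of_nat twos') / 2.
Proof.
  unfold string_center, half.
  rewrite minus_IZR, !plus_IZR, mult_IZR, <- !INR_IZR_INZ. simpl. field.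
Qed.

Lemma is_RInt_R_sigma0_Psi twos' twos :
  is_RInt_R (fun lam => sigma0 lam * Psi twos' twos lam)
    (digamma ((half twos' + half twos + 1) / 2)
     - digamma ((Rabs (half twos' - half twos) + 1) / 2)).
Proof.
  set (g := fun k => digamma_abs (string_center twos' twos k - / 2)).
  replace (digamma ((half twos' + half twos + 1) / 2)
           - digamma ((Rabs (half twos' - half twos) + 1) / 2))
    with (lsum (fun k => g (S k) - g k) (seq 0 twos')).
  - apply (is_RInt_gen_ext (fun lam => lsum (fun k => sigma0 lam * fx (string_center twos' twos k) lam)
                                        (seq 0 twos'))).
    + apply filter_forall. intros ab lam _. change_to_R_eq. unfold Psi, lsum, string_center.
      induction (seq 0 twos') as [|k l IH]; simpl; [ring|]. rewrite IH. ring.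
    + apply is_RInt_R_lsum. intros k _.
      replace (g (S k) - g k) with (digamma_abs (string_center twos' twos k + / 2)
                                    - digamma_abs (string_center twos' twos k - / 2))
        by (unfold g, string_center; rewrite S_INR; do 2 f_equal; field).
      apply is_RInt_R_sigma0_fx.
      rewrite string_center_IZR. apply half_IZR_cases.
  - rewrite lsum_seq_telescope. unfold g, digamma_abs, string_center. simpl.
    assert (0 <= half twos') by (unfold half; pose proof (pos_INR twos'); lra).
    assert (0 <= half twos) by (unfold half; pose proof (pos_INR twos); lra).
    replace (- half twos' + / 2 + INR twos' + INR twos / 2 - / 2) with (half twos' + half twos)
      by (unfold half; field).
    replace (- half twos' + / 2 + 0 + INR twos / 2 - / 2) with (- (half twos' - half twos))
      by (unfold half; field).
    rewrite Rabs_Ropp, (Rabs_pos_eq (half twos' + half twos)) by lra.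
    f_equal; f_equal; field.
Qed.

Theorem theorem5p1 (S : list nat) (rho : nat -> R) :
  S <> nil ->
  NoDup S ->
  (forall n, In n S -> (0 < n)%nat) ->
  (forall n, In n S -> 0 < rho n) ->
  lsum rho S = 1 ->
  forall twos : nat, In twos S ->
    E0 S rho twos =
    - lsum (fun twos' => rho twos' *
        (digamma ((half twos' + half twos + 1) / 2)
         - digamma ((Rabs (half twos' - half twos) + 1) / 2))) S.
Proof.
  intros _ _ _ _ _ twos _. unfold E0. f_equal. apply lsum_ext. intros twos'.
  f_equal. unfold integral_R. apply is_RInt_gen_unique, is_RInt_R_sigma0_Psi.
Qed.
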